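(* Let $X$ be an infinite compact metrizable space and $h\colon X\to X$ a minimal homeomorphism. (1) If $F_1,F_2\subset X$ are closed and $V_1,V_2\subset X$ are open with $F_1\prec V_1$, $F_2\prec V_2$ and $V_1\cap V_2=\varnothing$, then $F_1\cup F_2\prec V_1\cup V_2$. (2) The union of finitely many thin sets in $X$ is thin.
   Context: For $F\subset X$ closed and $U\subset X$ open, write $F\prec U$ if there exist $M\in\mathbb{N}$, open sets $U_0,\dots,U_M\subset X$ and integers $d(0),\dots,d(M)$ such that $F\subset\bigcup_{j=0}^M U_j$, $h^{d(j)}(U_j)\subset U$ for all $j$, and the sets $h^{d(j)}(U_j)$ are pairwise disjoint. A closed set $F$ is thin if $F\prec U$ for every non-empty open $U\subset X$. *)

From HB Require Import structures.
From mathcomp Require Import all_boot all_order all_algebra.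
From mathcomp Require Import all_classical all_reals all_analysis.
Set Implicit Arguments. Unset Strict Implicit. Unset Printing Implicit Defensive.
Import Order.TTheory GRing.Theory Num.Theory.
Local Open Scope classical_set_scope.
Local Open Scope ring_scope.

Definition homeomorphism (X : topologicalType) (h hinv : X -> X) : Prop :=
  [/\ continuous h, continuous hinv, cancel h hinv & cancel hinv h].

Definition iterz (X : Type) (h hinv : X -> X) (d : int) : X -> X :=
  match d with
  | Posz n => iter n h
  | Negz n => iter n.+1 hinv
  end.

Definition minimal_homeo (X : topologicalType) (h hinv : X -> X) : Prop :=
  forall x : X, closure [set iterz h hinv d x | d in [set: int]] = [set: X].

Definition prec (X : topologicalType) (h hinv : X -> X) (F U : set X) : Prop :=
  exists (M : nat) (Us : nat -> set X) (d : nat -> int),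
    [/\ forall j, (j <= M)%N -> open (Us j),
        F `<=` \bigcup_(j in [set j : nat | (j <= M)%N]) Us j,
        forall j, (j <= M)%N -> iterz h hinv (d j) @` Us j `<=` U &
        forall i j, (i <= M)%N -> (j <= M)%N -> i <> j ->
          iterz h hinv (d i) @` Us i `&` iterz h hinv (d j) @` Us j = set0].

Definition thin (X : topologicalType) (h hinv : X -> X) (F : set X) : Prop :=
  closed F /\ forall U : set X, open U -> U !=set0 -> prec h hinv F U.

(* Part (1): concatenate the two families of witnesses; their translates stay
   pairwise disjoint because those of the first family lie in V1 and those of
   the second in V2.  Part (2): by minimality and compactness of an infinite X
   no point of X is isolated, so every non-empty open U contains two disjoint
   non-empty open sets V1 and V2; if F1 is thin and the union F of the others
   satisfies F ≺ W for every non-empty open W, then F1 ≺ V1 and F ≺ V2, and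
   part (1) gives F1 ∪ F ≺ U. *)
From HB Require Import structures.
From mathcomp Require Import all_boot all_order all_algebra.
From mathcomp Require Import all_classical all_reals all_analysis.
From mathcomp Require Import zify.
Set Implicit Arguments. Unset Strict Implicit. Unset Printing Implicit Defensive.
Import Order.TTheory GRing.Theory Num.Theory.
Local Open Scope classical_set_scope.
Local Open Scope ring_scope.

Lemma iter_continuous (X : topologicalType) (f : X -> X) n :
  continuous f -> continuous (iter n f).
Proof.
move=> cf; elim: n => [|n IHn] x /=; first exact: cvg_id.
exact: continuous_comp (IHn x) (cf _).
Qed.

Lemma iter_injective (X : Type) (f : X -> X) n :
  injective f -> injective (iter n f).
Proof. by move=> injf; elim: n => [|n IHn] //= x y /injf /IHn. Qed.

Section Iterz.
Variables (X : topologicalType) (h hinv : X -> X).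
Hypothesis homeo_h : homeomorphism h hinv.

Lemma iterz_continuous d : continuous (iterz h hinv d).
Proof. by case: homeo_h => ch chinv _ _; case: d => n; apply: iter_continuous. Qed.

Lemma iterz_injective d : injective (iterz h hinv d).
Proof.
case: homeo_h => _ _ hK hinvK.
by case: d => n; apply: iter_injective; [exact: can_inj hK|exact: can_inj hinvK].
Qed.

End Iterz.

Section Prec.
Variables (X : topologicalType) (h hinv : X -> X).

Lemma prec_subset (F F' U U' : set X) :
  F' `<=` F -> U `<=` U' -> prec h hinv F U -> prec h hinv F' U'.
Proof.
move=> F'F UU' [M [Us [d [oUs FUs UsU disjUs]]]].
exists M, Us, d; split => //.
- by move=> x /F'F /FUs.
- by move=> j jM x /(UsU j jM) /UU'.
Qed.

Lemma prec_setU (F1 F2 V1 V2 : set X) :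
  prec h hinv F1 V1 -> prec h hinv F2 V2 -> V1 `&` V2 = set0 ->
  prec h hinv (F1 `|` F2) (V1 `|` V2).
Proof.
move=> [M1 [U1 [d1 [oU1 FU1 UV1 disjU1]]]] [M2 [U2 [d2 [oU2 FU2 UV2 disjU2]]]] V12.
pose glue T (f1 f2 : nat -> T) j := if (j <= M1)%N then f1 j else f2 (j - M1.+1)%N.
have disjV A B : A `<=` V1 -> B `<=` V2 -> A `&` B = set0.
  by move=> AV1 BV2; apply/seteqP; split => // x [/AV1 ? /BV2 ?]; rewrite -V12.
exists (M1 + M2).+1, (glue _ U1 U2), (glue _ d1 d2); rewrite /glue; split.
- by move=> j jM; case: ifP => jM1; [exact: oU1|apply: oU2; lia].
- move=> x [/FU1 [j /= jM1 U1x]|/FU2 [j /= jM2 U2x]].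
    by exists j => /=; [lia|rewrite jM1].
  by exists (j + M1.+1)%N => /=; [lia|rewrite ifF ?addnK //; lia].
- move=> j jM; case: ifP => jM1 x img; first by left; exact: UV1 img.
  by right; apply: UV2 img; lia.
- move=> i j iM jM ij; case: ifP => iM1; case: ifP => jM1.
  + exact: disjU1.
  + by apply: disjV; [exact: UV1|apply: UV2; lia].
  + by rewrite setIC; apply: disjV; [exact: UV1|apply: UV2; lia].
  + by apply: disjU2; lia.
Qed.

End Prec.

Lemma compact_discrete_finite (T : topologicalType) :
  compact [set: T] -> (forall x : T, open [set x]) -> finite_set [set: T].
Proof.
move=> cT open1; apply: contrapT => /frechet_properfilter frechetT.
have [p [_ clp]] := cT _ frechetT (cofinite_setT T).
have cofinNp : frechet_filter (~` [set p]).
  by rewrite /frechet_filter /= setCK; exact: finite_set1.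
have [z [zNp pz]] := clp _ [set p] cofinNp (open_nbhs_nbhs (conj (open1 p) erefl)).
exact: zNp.
Qed.

Section MinimalHomeomorphism.
Variables (X : topologicalType) (h hinv : X -> X).
Hypotheses (homeo_h : homeomorphism h hinv) (minimal_h : minimal_homeo h hinv).

(* The orbit of [y] is dense, so it meets the open set [{x}]: some iterate
   maps [y] to [x], and [{y}] is the preimage of [{x}] under it. *)
Lemma minimal_open_set1 (x y : X) : open [set x] -> open [set y].
Proof.
move=> ox; have : closure [set iterz h hinv d y | d in [set: int]] x.
  by rewrite minimal_h.
move=> /(_ [set x] (open_nbhs_nbhs (conj ox erefl))) [_ [[d _ <-] /= dyx]].
have -> : [set y] = iterz h hinv d @^-1` [set x].
  apply/seteqP; split => [w /= -> //|w /= dwx].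
  by apply: (iterz_injective homeo_h (d := d)); rewrite dwx dyx.
by move/continuousP: (iterz_continuous homeo_h (d := d)); apply.
Qed.

Lemma minimal_not_open_set1 (x : X) :
  compact [set: X] -> ~ finite_set [set: X] -> ~ open [set x].
Proof.
move=> cX infX ox; apply: infX; apply: compact_discrete_finite => // y.
exact: minimal_open_set1 ox.
Qed.

End MinimalHomeomorphism.

Lemma open_disjoint_split (X : topologicalType) : hausdorff_space X ->
    (forall x : X, ~ open [set x]) ->
  forall U : set X, open U -> U !=set0 ->
  exists V1 V2 : set X, [/\ open V1, open V2, V1 !=set0 & V2 !=set0] /\
    [/\ V1 `<=` U, V2 `<=` U & V1 `&` V2 = set0].
Proof.
move=> hX not_open1 U oU [x Ux].
have [y [Uy yx]] : exists y, U y /\ y <> x.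
  apply: contrapT => noy; apply: (not_open1 x).
  suff -> : [set x] = U by [].
  apply/seteqP; split => [z /= -> //|z Uz].
  by apply: contrapT => zx; apply: noy; exists z.
move: hX; rewrite open_hausdorff => /(_ x y) [].
  by apply/eqP => xy; apply: yx.
move=> [A B] /= [xA yB] [oA oB /eqP AB0].
exists (U `&` A), (U `&` B); split; split.
- exact: openI.
- exact: openI.
- by exists x; split => //; move: xA; rewrite inE.
- by exists y; split => //; move: yB; rewrite inE.
- by move=> z [].
- by move=> z [].
- by apply/seteqP; split => // z [[_ Az] [_ Bz]]; rewrite -AB0.
Qed.

Lemma thin_bigcup_prec (X : topologicalType) (h hinv : X -> X) :
    hausdorff_space X -> (forall x : X, ~ open [set x]) ->
  forall n (F : 'I_n -> set X), (forall i, thin h hinv (F i)) ->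
  forall U, open U -> U !=set0 ->
  prec h hinv (\bigcup_(i in [set: 'I_n]) F i) U.
Proof.
move=> hX not_open1; elim=> [|n IHn] F thinF U oU U0.
  exists 0%N, (fun=> set0), (fun=> 0); split.
  - by move=> _ _; exact: open0.
  - by move=> x [[]].
  - by move=> j _ z [].
  - by move=> i j _ _ _; apply/seteqP; split => // z [[]].
have [V1 [V2 [[oV1 oV2 V10 V20] [V1U V2U V12]]]] :=
  open_disjoint_split hX not_open1 oU U0.
apply: (@prec_subset _ h hinv
  (F ord0 `|` \bigcup_(i in [set: 'I_n]) F (lift ord0 i)) _ (V1 `|` V2)).
- move=> x [i _]; case: (unliftP ord0 i) => [j|] -> Fx; last by left.
  by right; exists j.
- by move=> x [/V1U|/V2U].
apply: prec_setU; last exact: V12.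
  exact: (thinF ord0).2.
by apply: IHn => // i.
Qed.

Theorem lemma3p7 (R : realType) (X : metricType R) (h hinv : X -> X) :
  compact [set: X] -> ~ finite_set [set: X] ->
  homeomorphism h hinv -> minimal_homeo h hinv ->
  (forall (F1 F2 V1 V2 : set X),
      closed F1 -> closed F2 -> open V1 -> open V2 ->
      prec h hinv F1 V1 -> prec h hinv F2 V2 -> V1 `&` V2 = set0 ->
      prec h hinv (F1 `|` F2) (V1 `|` V2)) /\
  (forall (n : nat) (F : 'I_n -> set X),
      (forall i, thin h hinv (F i)) ->
      thin h hinv (\bigcup_(i in [set: 'I_n]) F i)).
Proof.
move=> cX infX homeo_h minimal_h; split.
  by move=> F1 F2 V1 V2 _ _ _ _; exact: prec_setU.
move=> n F thinF; split.
  by apply: closed_bigcup => [|i _]; [exact: finite_finset|exact: (thinF i).1].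
apply: thin_bigcup_prec => //; first exact: metric_hausdorff.
by move=> x; exact: minimal_not_open_set1 homeo_h minimal_h x cX infX.
Qed.
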